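(* Let $X$ be an undirected graph and $f:Y\to X$ an object of $C_X$ such that $Y$ has no loops. Then for every $p>1$ and every $p$-cycle $h:c^p_U\to Y$ without backtracking, there exist an element $U\to X$ of $R^p_X$ (with distinguished cycle subgraph $c^p_U\subseteq U$) and a morphism $g:U\to Y$ of $C_X$ whose restriction to $c^p_U$ equals $h$.
   Context: An undirected graph has nodes $X(0)$, half-arcs $X(1)$, $s,t:X(1)\to X(0)$, and an involution $\iota$ with $s\circ\iota=t$; morphisms commute with $s,t,\iota$. An arc is a pair $\{u,\iota(u)\}$; a loop is an arc whose source and target coincide (including half-arcs fixed by $\iota$). For a node $x$, $X(x,* )$ is the set of arcs having $x$ as source or target. A morphism $f$ is a covering if for every node $x$ the induced map on arcs $X(x,* )\to Y(f_0(x),* )$ is bijective. $C_X$: objects are coverings $Y\to X$, morphisms are coverings $h:Y\to Z$ commuting with the maps to $X$. For $p\ge1$, $c^p_U$ has nodes $\mathbb{Z}/p\mathbb{Z}$ and half-arcs $[n]^\pm$ with $s([n]^+)=[n]$, $t([n]^+)=[n+1]$, $s([n]^-)=[n+1]$, $t([n]^-)=[n]$, $\iota([n]^+)=[n]^-$; a $p$-cycle of $Y$ is a morphism $h:c^p_U\to Y$, which has backtracking if $h_1([n+1]^+)=h_1([n]^-)$ for some $n$. $R^p_X$ is the set of objects $U\to X$ of $C_X$ such that $U$ is obtained by attaching a forest to a $p$-cycle: $U$ contains a subgraph isomorphic to $c^p_U$ and removing the arcs of this subgraph leaves a forest each of whose trees contains exactly one node of the cycle. *)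

From mathcomp Require Import all_boot.
From Stdlib Require Import Relations.
Set Implicit Arguments. Unset Strict Implicit. Unset Printing Implicit Defensive.

(* An undirected graph: nodes V = X(0), half-arcs H = X(1), s, t, involution iota
   with s o iota = t.  Node/half-arc sets are arbitrary types (possibly infinite). *)
Record graph := Graph {
  V : Type;
  H : Type;
  src : H -> V;
  tgt : H -> V;
  inv : H -> H;
  invK : forall u, inv (inv u) = u;
  src_inv : forall u, src (inv u) = tgt u
}.

Record hom (G K : graph) := Hom {
  hom0 : V G -> V K;
  hom1 : H G -> H K;
  hom_src : forall u, src (hom1 u) = hom0 (src u);
  hom_tgt : forall u, tgt (hom1 u) = hom0 (tgt u);
  hom_inv : forall u, inv (hom1 u) = hom1 (inv u)
}.

(* The arc {u, iota u} represented by u: v represents the same arc as u. *)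
Definition same_arc (G : graph) (u v : H G) : Prop := v = u \/ v = inv u.

Definition arc_at (G : graph) (x : V G) (u : H G) : Prop := src u = x \/ tgt u = x.

(* f is a covering: for each node x the induced map on arcs
   X(x, * ) -> Y(f0 x, * ), {u, iota u} |-> {f1 u, f1 (iota u)}, is bijective. *)
Definition is_covering (G K : graph) (f : hom G K) : Prop :=
  forall x : V G,
    (forall w, arc_at (hom0 f x) w ->
       exists u, arc_at x u /\ same_arc (hom1 f u) w) /\
    (forall u v, arc_at x u -> arc_at x v ->
       same_arc (hom1 f u) (hom1 f v) -> same_arc u v).

Definition has_no_loops (G : graph) : Prop := forall u : H G, src u <> tgt u.

(* The cycle graph c^p_U: nodes Z/pZ (= 'I_p with successor ordS),
   half-arcs [n]^+ = (n, true), [n]^- = (n, false). *)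
Definition cyc_src p (a : 'I_p * bool) : 'I_p :=
  if a.2 then a.1 else ordS a.1.
Definition cyc_tgt p (a : 'I_p * bool) : 'I_p :=
  if a.2 then ordS a.1 else a.1.
Definition cyc_inv p (a : 'I_p * bool) : 'I_p * bool := (a.1, ~~ a.2).

Lemma cyc_invK p (a : 'I_p * bool) : cyc_inv (cyc_inv a) = a.
Proof. by case: a => n b; rewrite /cyc_inv /= negbK. Qed.

Lemma cyc_src_inv p (a : 'I_p * bool) : cyc_src (cyc_inv a) = cyc_tgt a.
Proof. by case: a => n [] . Qed.

Definition cycle_graph (p : nat) : graph :=
  @Graph 'I_p ('I_p * bool) (@cyc_src p) (@cyc_tgt p) (@cyc_inv p)
         (@cyc_invK p) (@cyc_src_inv p).

Definition backtracking (p : nat) (Y : graph) (h : hom (cycle_graph p) Y) : Prop :=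
  exists n : 'I_p, hom1 h (ordS n, true) = hom1 h (n, false).

(* The subgraph of G with all nodes and the half-arcs satisfying P
   (P is closed under iota in our uses) is a forest: it has no loops
   and no p-cycle (p >= 1) without backtracking. *)
Definition forest_in (G : graph) (P : H G -> Prop) : Prop :=
  (forall u, P u -> src u <> tgt u) /\
  (forall (p : nat) (h : hom (cycle_graph p) G),
      0 < p -> (forall a, P (hom1 h a)) -> backtracking h).

Definition connected_in (G : graph) (P : H G -> Prop) : relation (V G) :=
  clos_refl_trans (V G) (fun a b => exists u, P u /\ src u = a /\ tgt u = b).

(* U -> X (via fU) lies in R^p_X with distinguished cycle e : c^p_U -> U:
   fU is a covering; e is injective on nodes and half-arcs (so its image is a
   subgraph isomorphic to c^p_U); removing the arcs of that subgraph leaves a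
   forest each of whose trees (connected components) contains exactly one
   node of the cycle. *)
Definition in_R_with (p : nat) (X U : graph) (fU : hom U X)
    (e : hom (cycle_graph p) U) : Prop :=
  is_covering fU /\
  injective (hom0 e) /\ injective (hom1 e) /\
  let P := fun u : H U => ~ (exists a, hom1 e a = u) in
  forest_in P /\
  (forall y : V U, exists! n : 'I_p, connected_in P (hom0 e n) y).

From Stdlib Require Import ProofIrrelevance Classical Relations.
From mathcomp Require Import all_boot.
Set Implicit Arguments. Unset Strict Implicit.

(* The graph U is the "unrolling" of Y along h: on the cycle c^p we hang, at
   every node n, the tree of all non-backtracking walks of Y that start at
   h(n) and whose first step leaves the cycle (is neither h([n]^+) nor
   h([n-1]^-)).  A node of U is a pair (n, w) with w such a walk; its image
   under g is the end point of w. *)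

Lemma tgt_inv (G : graph) (u : H G) : tgt (inv u) = src u.
Proof. by rewrite -src_inv invK. Qed.

Lemma same_arc_sym (G : graph) (u v : H G) : same_arc u v -> same_arc v u.
Proof. by case=> ->; [left | right; rewrite invK]. Qed.

Lemma same_arc_trans (G : graph) (u v w : H G) :
  same_arc u v -> same_arc v w -> same_arc u w.
Proof. by rewrite /same_arc => [[->|->]] [->|->]; rewrite ?invK; tauto. Qed.

Lemma same_arc_hom (G K : graph) (g : hom G K) u v :
  same_arc u v -> same_arc (hom1 g u) (hom1 g v).
Proof. by case=> ->; [left | right; rewrite hom_inv]. Qed.

Lemma arc_at_hom (G K : graph) (g : hom G K) x u :
  arc_at x u -> arc_at (hom0 g x) (hom1 g u).
Proof. by case=> <-; [left; rewrite hom_src | right; rewrite hom_tgt]. Qed.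

Definition hom_comp (A B C : graph) (g : hom A B) (f : hom B C) : hom A C.
Proof.
refine (@Hom A C (fun v => hom0 f (hom0 g v)) (fun u => hom1 f (hom1 g u)) _ _ _).
- by move=> u; rewrite !hom_src.
- by move=> u; rewrite !hom_tgt.
- by move=> u; rewrite !hom_inv.
Defined.

Lemma covering_comp (A B C : graph) (g : hom A B) (f : hom B C) :
  is_covering g -> is_covering f -> is_covering (hom_comp g f).
Proof.
move=> cov_g cov_f x; split.
- move=> w /= xw.
  have [u' [xu' u'w]] := proj1 (cov_f (hom0 g x)) w xw.
  have [u [xu uu']] := proj1 (cov_g x) u' xu'.
  by exists u; split => //; apply: same_arc_trans (same_arc_hom f uu') u'w.
- move=> u v xu xv /= uv.
  apply: (proj2 (cov_g x)) => //.
  by apply: (proj2 (cov_f (hom0 g x))) => //; apply: arc_at_hom.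
Qed.

Lemma arc_at_out (G : graph) (x : V G) u :
  arc_at x u -> exists a, src a = x /\ same_arc u a.
Proof.
case=> xu; first by exists u; split => //; left.
by exists (inv u); split; [rewrite src_inv | right].
Qed.

(* Local criterion: into a loop-free graph, a morphism that is bijective from
   the half-arcs leaving x onto those leaving g(x), for every node x, is a
   covering.  (Loop-freeness excludes that two half-arcs leaving x are sent to
   the two halves of one arc.) *)
Lemma covering_of_out_arcs (G K : graph) (g : hom G K) :
  has_no_loops K ->
  (forall x y, src y = hom0 g x -> exists a, src a = x /\ hom1 g a = y) ->
  (forall a b, src a = src b -> hom1 g a = hom1 g b -> a = b) ->
  is_covering g.
Proof.
move=> noloop out_surj out_inj x; split.
- move=> w /arc_at_out [y [yx wy]].
  have [a [<- ay]] := out_surj x y yx.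
  by exists a; split; [left | rewrite ay; apply: same_arc_sym].
- move=> u v /arc_at_out [a [ax ua]] /arc_at_out [b [bx vb]] uv.
  have ab : same_arc (hom1 g a) (hom1 g b).
    apply: same_arc_trans (same_arc_hom g vb).
    exact: same_arc_trans (same_arc_sym (same_arc_hom g ua)) uv.
  case: ab => [gab | gab].
  + have ab : b = a by apply: out_inj; rewrite ?ax ?bx.
    by subst b; apply: same_arc_trans ua (same_arc_sym vb).
  + exfalso; apply: (noloop (hom1 g a)).
    by rewrite -src_inv -gab !hom_src ax bx.
Qed.

Section Unrolling.
Variables (Y : graph) (p : nat) (h : hom (cycle_graph p) Y).

(* Walks are stored in reverse, last half-arc first.  [walk_end n w] is the
   end point of the walk w starting at h(n). *)
Definition walk_end (n : 'I_p) (w : seq (H Y)) : V Y :=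
  if w is u :: _ then tgt u else hom0 h n.

Definition fresh_step (n : 'I_p) (w : seq (H Y)) (u : H Y) : Prop :=
  if w is u' :: _ then u <> inv u'
  else u <> hom1 h (n, true) /\ u <> hom1 h (ord_pred n, false).

Fixpoint tree_walk (n : 'I_p) (w : seq (H Y)) : Prop :=
  if w is u :: w' then
    [/\ tree_walk n w', src u = walk_end n w' & fresh_step n w' u]
  else True.

Record unode := UNode { base : 'I_p; walk : seq (H Y); walkP : tree_walk base walk }.

Lemma unode_eq (x y : unode) : base x = base y -> walk x = walk y -> x = y.
Proof.
case: x y => n w ok [n' w' ok'] /= en ew; subst n' w'.
by rewrite (proof_irrelevance _ ok ok').
Qed.

(* Tree half-arcs of U: the step from (n, w) to (n, u :: w), oriented
   downwards (away from the cycle) when [down] is true. *)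
Record tedge := TEdge {
  e_base : 'I_p; e_step : H Y; e_walk : seq (H Y);
  e_ok : tree_walk e_base (e_step :: e_walk); down : bool }.

Lemma tree_walk_behead n u w : tree_walk n (u :: w) -> tree_walk n w.
Proof. by case. Qed.

Definition child (t : tedge) : unode := UNode (e_ok t).
Definition parent (t : tedge) : unode := UNode (tree_walk_behead (e_ok t)).

Lemma tedge_child_inj (t t' : tedge) :
  child t = child t' -> down t = down t' -> t = t'.
Proof.
case: t t' => n u w ok d [n' u' w' ok' d'] E /= <-.
move: (f_equal base E) (f_equal walk E) => /= en [eu ew].
by subst; rewrite (proof_irrelevance _ ok ok').
Qed.

Definition cycle_node (n : 'I_p) : unode := @UNode n [::] I.

Definition uhalf := (('I_p * bool) + tedge)%type.

Definition usrc (a : uhalf) : unode :=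
  match a with
  | inl c => cycle_node (cyc_src c)
  | inr t => if down t then parent t else child t
  end.
Definition utgt (a : uhalf) : unode :=
  match a with
  | inl c => cycle_node (cyc_tgt c)
  | inr t => if down t then child t else parent t
  end.
Definition flip (t : tedge) : tedge := TEdge (e_ok t) (~~ down t).
Definition uinv (a : uhalf) : uhalf :=
  match a with inl c => inl (cyc_inv c) | inr t => inr (flip t) end.

Lemma uinvK a : uinv (uinv a) = a.
Proof. by case: a => [c | [n u w ok d]] /=; rewrite ?cyc_invK /flip /= ?negbK. Qed.

Lemma usrc_inv a : usrc (uinv a) = utgt a.
Proof. by case: a => [c | [n u w ok []]] //=; rewrite cyc_src_inv. Qed.

Definition Ugraph : graph := @Graph unode uhalf usrc utgt uinv uinvK usrc_inv.

Definition proj0 (x : unode) : V Y := walk_end (base x) (walk x).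
Definition proj1 (a : uhalf) : H Y :=
  match a with
  | inl c => hom1 h c
  | inr t => if down t then e_step t else inv (e_step t)
  end.

Definition proj_hom : hom Ugraph Y.
Proof.
refine (@Hom Ugraph Y proj0 proj1 _ _ _).
- case=> [c | [n u w ok []]] /=; rewrite ?hom_src ?src_inv //; by case: ok.
- case=> [c | [n u w ok []]] /=; rewrite ?hom_tgt ?tgt_inv //; by case: ok.
- case=> [c | [n u w ok []]] /=; by rewrite ?hom_inv ?invK.
Defined.

Definition cycle_hom : hom (cycle_graph p) Ugraph.
Proof. by refine (@Hom (cycle_graph p) Ugraph cycle_node inl _ _ _). Defined.

End Unrolling.

Arguments base {Y p h}.
Arguments walk {Y p h}.

Section Projection.
Variables (Y : graph) (p : nat) (h : hom (cycle_graph p) Y).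
Hypothesis noloop : has_no_loops Y.
Hypothesis no_backtrack : ~ backtracking h.

(* Every half-arc y of Y leaving g(x) lifts to a half-arc leaving x: along the
   cycle, back up the tree, or down to a new child. *)
Lemma proj_out_surj (x : unode h) (y : H Y) :
  src y = proj0 x -> exists a : uhalf h, usrc a = x /\ proj1 a = y.
Proof.
case: x => n [|u w] ok /= yx.
- have [-> | not_fwd] := classic (y = hom1 h (n, true)).
    by exists (inl (n, true)); split => //; apply: unode_eq.
  have [-> | not_bwd] := classic (y = hom1 h (ord_pred n, false)).
    exists (inl (ord_pred n, false)); split => //.
    by apply: unode_eq => //; apply: ord_predK.
  have ok' : tree_walk h n [:: y] by split=> //; split.
  by exists (inr (TEdge ok' true)); split => //; apply: unode_eq.
- have [-> | fresh] := classic (y = inv u).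
    by exists (inr (TEdge ok false)).
  have ok' : tree_walk h n [:: y, u & w] by split.
  by exists (inr (TEdge ok' true)); split => //; apply: unode_eq.
Qed.

(* Two cycle half-arcs with the same source and image coincide, since h does
   not backtrack. *)
Lemma proj_out_inj_cycle (c c' : 'I_p * bool) :
  cyc_src c = cyc_src c' -> hom1 h c = hom1 h c' -> c = c'.
Proof.
case: c c' => [m []] [m' []]; rewrite /cyc_src /= => src_eq img_eq.
- by rewrite src_eq.
- by case: no_backtrack; exists m'; rewrite -src_eq.
- by case: no_backtrack; exists m; rewrite src_eq.
- by rewrite (ordS_inj src_eq).
Qed.

(* A tree half-arc never leaves a cycle node in the direction of a cycle
   half-arc: first steps are fresh. *)
Lemma proj_out_cycle_tree (c : 'I_p * bool) (t : tedge h) :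
  cycle_node h (cyc_src c) = usrc (inr t) -> hom1 h c <> proj1 (inr t).
Proof.
case: t => n u w ok [] /= E; move: (f_equal (walk) E) => //= ew.
subst w; have [_ _ [not_fwd not_bwd]] := ok.
move: (f_equal (base) E) not_fwd not_bwd => /= <-.
by case: c {E} => m [] /= not_fwd not_bwd; [|rewrite ordSK in not_bwd];
  move/esym.
Qed.

(* Two tree half-arcs with the same source and image coincide: going down is
   determined by the step, going up by the node, and a step down cannot undo
   the step just taken. *)
Lemma proj_out_inj_tree (t t' : tedge h) :
  usrc (inr t) = usrc (inr t') -> proj1 (inr t) = proj1 (inr t') -> t = t'.
Proof.
have up_down (s s' : tedge h) : down s -> ~~ down s' ->
    usrc (inr s) = usrc (inr s') -> proj1 (inr s) <> proj1 (inr s').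
  case: s s' => n u w ok [] // [n' u' w' ok' []] //= _ _ E.
  by have [_ _] := ok; move: (f_equal (walk) E) => /= ->.
case: t t' => n u w ok [] [n' u' w' ok' []] /= E img.
- move: (f_equal (base) E) (f_equal (walk) E) => /= en ew.
  by subst; rewrite (proof_irrelevance _ ok ok').
- by case: (up_down (TEdge ok true) (TEdge ok' false) isT isT E img).
- by case: (up_down (TEdge ok' true) (TEdge ok false) isT isT (esym E) (esym img)).
- exact: (@tedge_child_inj _ _ _ (TEdge ok false) (TEdge ok' false)).
Qed.

Lemma proj_out_inj (a b : uhalf h) : usrc a = usrc b -> proj1 a = proj1 b -> a = b.
Proof.
case: a b => [c | t] [c' | t'] E img.
- by rewrite (proj_out_inj_cycle (f_equal (base) E) img).
- by case: (proj_out_cycle_tree E img).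
- by case: (proj_out_cycle_tree (esym E) (esym img)).
- by rewrite (proj_out_inj_tree E img).
Qed.

Lemma proj_covering : is_covering (proj_hom h).
Proof.
apply: covering_of_out_arcs noloop _ _; [exact: proj_out_surj | exact: proj_out_inj].
Qed.

End Projection.

Section Forest.
Variables (Y : graph) (p : nat) (h : hom (cycle_graph p) Y).

Definition off_cycle (a : H (Ugraph h)) : Prop :=
  ~ (exists c, hom1 (cycle_hom h) c = a).

Lemma off_cycle_tree (a : uhalf h) : off_cycle a -> exists t, a = inr t.
Proof. by case: a => [c | t] off; [case: off; exists c | exists t]. Qed.

Definition depth (x : unode h) : nat := size (walk x).

(* No loops and no non-backtracking cycle off the embedded cycle: around a
   cycle, a node of maximal depth is entered from its parent and left towards
   it again along the same arc. *)
Lemma forest_off_cycle : forest_in off_cycle.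
Proof.
split.
  move=> a /off_cycle_tree [t ->] /= E.
  have := f_equal depth E; case: (down t) => /= /eqP;
    by rewrite ?(gtn_eqF (ltnSn _)) ?(ltn_eqF (ltnSn _)).
move=> q k q_gt0 off_k.
have [m _ deepest] := @arg_maxnP _ (Ordinal q_gt0) xpredT (depth \o hom0 k) isT.
exists (ord_pred m); rewrite ord_predK.
have [t_out out_eq] := off_cycle_tree (off_k (m, true)).
have [t_in in_eq] := off_cycle_tree (off_k (ord_pred m, true)).
have src_out := hom_src k (m, true); have tgt_out := hom_tgt k (m, true).
have src_in := hom_src k (ord_pred m, true).
have tgt_in := hom_tgt k (ord_pred m, true).
rewrite out_eq in src_out tgt_out; rewrite in_eq in src_in tgt_in.
rewrite /= /cyc_src /cyc_tgt /= ord_predK in src_out tgt_out src_in tgt_in.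
have out_up : down t_out = false.
  apply/negbTE/negP => d_out; have := deepest (ordS m) isT.
  by rewrite /= -tgt_out -src_out d_out /= ltnn.
have in_down : down t_in = true.
  apply/negPn/negP => d_in; have := deepest (ord_pred m) isT.
  by rewrite /= -tgt_in -src_in (negbTE d_in) /= ltnn.
rewrite out_eq -(hom_inv k (ord_pred m, true)) in_eq /=; congr inr.
apply: tedge_child_inj; last by rewrite /= out_up in_down.
by move: src_out tgt_in; rewrite out_up in_down /= => -> <-.
Qed.

Lemma connected_base (x y : unode h) :
  connected_in off_cycle x y -> base x = base y.
Proof.
elim=> [x' y' [a [off [<- <-]]] | // | x' y' z _ -> _ -> //].
by have [[n u w ok []] ->] := off_cycle_tree off.
Qed.

Lemma connected_cycle_node n w (ok : tree_walk h n w) :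
  connected_in off_cycle (cycle_node h n) (UNode ok).
Proof.
elim: w ok => [|u w IH] ok.
  by rewrite (proof_irrelevance _ ok I); apply: rt_refl.
apply: rt_trans (IH (tree_walk_behead ok)) _; apply: rt_step.
by exists (inr (TEdge ok true)); split => //; case.
Qed.

Lemma unique_cycle_node (x : unode h) :
  exists! n : 'I_p, connected_in off_cycle (hom0 (cycle_hom h) n) x.
Proof.
case: x => n w ok; exists n; split; first exact: connected_cycle_node.
by move=> n' /connected_base.
Qed.

End Forest.

Theorem proposition5p3 (X Y : graph) (f : hom Y X) :
  is_covering f -> has_no_loops Y ->
  forall (p : nat) (h : hom (cycle_graph p) Y),
    1 < p -> ~ backtracking h ->
    exists (U : graph) (fU : hom U X) (e : hom (cycle_graph p) U),
      in_R_with fU e /\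
      exists g : hom U Y,
        is_covering g /\
        (forall v, hom0 f (hom0 g v) = hom0 fU v) /\
        (forall u, hom1 f (hom1 g u) = hom1 fU u) /\
        (forall n, hom0 g (hom0 e n) = hom0 h n) /\
        (forall a, hom1 g (hom1 e a) = hom1 h a).
Proof.
move=> cov_f noloop p h _ no_backtrack.
have cov_g := proj_covering noloop no_backtrack.
exists (Ugraph h), (hom_comp (proj_hom h) f), (cycle_hom h).
split; last by exists (proj_hom h).
split; first exact: covering_comp.
split; first by move=> m n /(f_equal base).
split; first by move=> a b [].
split; first exact: forest_off_cycle.
exact: unique_cycle_node.
Qed.
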